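(* Let $d\ge1$ and let $y=(y_S)_{S\in\mathcal{V}_{n,2d}}$ be a vector over $\mathbb{F}_q$. Suppose $H_d(y)$ is nonzero and $\operatorname{rank}H_d(y)\le d$. Then there exists $e\in\{0,1,\dots,d-1\}$ such that $r_e=r_{e+1}>0$.
   Context: $\mathbb{F}_q$ is a finite field. $\mathcal{V}_{n,j}:=\{S\subseteq\{1,\dots,n\}:0\le|S|\le j\}$ (including $\emptyset$). For $0\le e\le d$, $H_e(y)$ is the matrix with rows and columns indexed by $\mathcal{V}_{n,e}$ and $(S,T)$ entry $y_{S\cup T}$, and $r_e:=\operatorname{rank}H_e(y)$. *)

From HB Require Import structures.
From mathcomp Require Import all_boot all_order all_algebra all_field.
Set Implicit Arguments. Unset Strict Implicit. Unset Printing Implicit Defensive.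
Import GRing.Theory.
Local Open Scope ring_scope.

Definition Vset (n j : nat) : {set {set 'I_n}} := [set S : {set 'I_n} | (#|S| <= j)%N].

(* The vector y is given as a function on
   all subsets; only its values on V_{n,2e} are ever used. *)
Definition Hmx (F : fieldType) (n e : nat) (y : {set 'I_n} -> F)
  : 'M[F]_(#|Vset n e|) :=
  \matrix_(i, j) y (enum_val i :|: enum_val j).

Definition rk (F : fieldType) (n e : nat) (y : {set 'I_n} -> F) : nat :=
  \rank (Hmx e y).

From HB Require Import structures.
From mathcomp Require Import all_boot all_order all_algebra all_field.
From mathcomp Require Import zify.
Import GRing.Theory.
Local Open Scope ring_scope.

(* Inside the support of a nonzero entry of H_d(y) pick W minimal for
   inclusion with y_W <> 0, so that |W| <= 2d and y vanishes on the proper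
   subsets of W, and put e0 := ceil(|W|/2) <= d.  Enumerate W as
   w_0, ..., w_{k-1}; for j <= e0 let S_j be the window {w_j, ..., w_{j+e0-1}}
   (truncated at w_{k-1}) and T_j := W \ S_j, all of size at most e0.  The
   (e0+1) x (e0+1) submatrix of H_{e0}(y) with entries y_{T_i ∪ S_j} is
   triangular with diagonal y_W, since for i < j the set T_i ∪ S_j misses w_i.
   Hence r_{e0} > e0 while r_d <= d, so the nondecreasing sequence
   r_{e0} <= ... <= r_d cannot increase at every step. *)

Lemma nondecreasing_flat_step {r : nat -> nat} {a b : nat} :
  {homo r : m n / (m <= n)%N} -> (a <= b)%N -> (r b < r a + (b - a))%N ->
  exists2 e, (a <= e < b)%N & r e = r e.+1.
Proof.
move=> r_homo; elim: b => [|b IHb] le_ab slow.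
  by move: le_ab slow; rewrite leqn0 => /eqP->; rewrite addn0 ltnn.
have [a_eq | le_ab'] : a = b.+1 \/ (a <= b)%N by lia.
  by rewrite a_eq subnn addn0 ltnn in slow.
have [flat | steep] := eqVneq (r b) (r b.+1); first by exists b; lia.
have lt_rb : (r b < r b.+1)%N by rewrite ltn_neqAle steep r_homo.
by have [e he flat] := IHb le_ab' ltac:(lia); exists e; lia.
Qed.

Section Segments.

Context {T : finType} (s : seq T).
Hypothesis s_uniq : uniq s.

Lemma mem_take_drop lo len x :
  (x \in take len (drop lo s)) = (x \in s) && (lo <= index x s < lo + len)%N.
Proof.
have := s_uniq; rewrite -{1 3 4 5}(cat_take_drop lo s) cat_uniq mem_cat index_cat.
case/and3P=> _ /hasPn disj _.
have [x_take | x_ntake] /= := boolP (x \in take lo s).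
  have x_ndrop : x \notin drop lo s by apply: contraL x_take; apply: disj.
  have := index_mem x (take lo s); rewrite x_take size_take_min => lt_idx.
  rewrite leqNgt (leq_trans lt_idx (geq_minl _ _)) /=.
  by apply: contraNF x_ndrop => /mem_take.
have [x_drop | x_ndrop] /= := boolP (x \in drop lo s); last first.
  by apply: contraNF x_ndrop => /mem_take.
have : (0 < size (drop lo s))%N by case: (drop lo s) x_drop.
rewrite size_drop subn_gt0 => /ltnW lo_le.
by rewrite in_take // size_takel // leq_addr ltn_add2l.
Qed.

Definition window lo len : {set T} := [set x in s | lo <= index x s < lo + len]%N.

Lemma card_window lo len : #|window lo len| = minn len (size s - lo).
Proof.
have -> : window lo len = [set x in take len (drop lo s)].
  by apply/setP=> x; rewrite !inE mem_take_drop.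
by rewrite cardsE (card_uniqP _) ?take_uniq ?drop_uniq // size_take_min size_drop.
Qed.

Lemma window_sub lo len : window lo len \subset [set x in s].
Proof. by apply/subsetP=> x; rewrite !inE => /andP[]. Qed.

Lemma nth_window x0 i lo len :
  (i < size s)%N -> (nth x0 s i \in window lo len) = (lo <= i < lo + len)%N.
Proof. by move=> lt_i; rewrite inE mem_nth // index_uniq. Qed.

End Segments.

Section MomentMatrix.

Context {F : fieldType} {n : nat} (y : {set 'I_n} -> F).

Lemma mxrank_union_submx {m e} {f g : 'I_m -> {set 'I_n}} :
  (forall i, #|f i| <= e)%N -> (forall j, #|g j| <= e)%N ->
  (\rank (\matrix_(i, j) y (f i :|: g j)) <= rk e y)%N.
Proof.
move=> f_le g_le; have set0_in : set0 \in Vset n e by rewrite inE cards0.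
pose idx := enum_rank_in set0_in.
have -> : \matrix_(i, j) y (f i :|: g j) = rowsub (idx \o f) (colsub (idx \o g) (Hmx e y)).
  by apply/matrixP=> i j; rewrite !mxE /= !enum_rankK_in // inE.
rewrite rowsubE; apply: leq_trans (mxrankM_maxr _ _) _.
by rewrite -[Hmx e y]mulmx1 -mulmx_colsub mxrankM_maxl.
Qed.

Lemma rk_homo : {homo (fun e => rk e y) : e1 e2 / (e1 <= e2)%N}.
Proof.
move=> e1 e2 le_e; apply: mxrank_union_submx => i;
  by have := enum_valP i; rewrite inE => /leq_trans; apply.
Qed.

Lemma rk_gt_minimal_support (W : {set 'I_n}) e :
  y W != 0 -> (forall V : {set 'I_n}, V \proper W -> y V = 0) ->
  (e <= #|W| <= e.*2)%N -> (e < rk e y)%N.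
Proof.
move=> yW_neq0 y_proper /andP[e_le_W W_le_2e].
pose s := enum W; have s_uniq : uniq s := enum_uniq W.
have size_s : size s = #|W| by rewrite cardE.
pose S (j : 'I_e.+1) := window s j e.
pose T (i : 'I_e.+1) := W :\: S i.
have S_sub i : S i \subset W by rewrite -[W]set_enum window_sub.
have card_S j : (#|S j| <= e)%N by rewrite card_window // geq_minl.
have card_T i : (#|T i| <= e)%N.
  by rewrite cardsDS // card_window // size_s; have := ltn_ord i; lia.
have diag i : T i :|: S i = W.
  by rewrite setUC -{1}(setIidPr (S_sub i)) setID.
have lower : is_trig_mx (\matrix_(i, j) y (T i :|: S j)).
  apply/is_trig_mxP=> i j lt_ij; rewrite mxE; apply: y_proper.
  have lt_i : (i < size s)%N by rewrite size_s; have := ltn_ord j; lia.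
  have /set0Pn[x0 _] : W != set0 by rewrite -card_gt0 -size_s; lia.
  apply/properP; split; first by rewrite subUset subsetDl S_sub.
  exists (nth x0 s i); first by rewrite -[W]set_enum inE mem_nth.
  rewrite in_setU in_setD !nth_window //; have := ltn_ord j; lia.
apply: leq_trans _ (mxrank_union_submx card_T card_S).
rewrite mxrank_unit // unitmxE unitfE det_trig //.
rewrite (eq_bigr (fun _ => y W)) => [|i _]; last by rewrite mxE diag.
by rewrite prodr_const expf_neq0.
Qed.

Lemma Hmx_neq0_minimal_support d : Hmx d y != 0 ->
  exists W : {set 'I_n}, [/\ y W != 0, (#|W| <= d.*2)%N
    & forall V : {set 'I_n}, V \proper W -> y V = 0].
Proof.
move=> Hd_neq0; have [i [j yij_neq0]] := matrix0Pn _ Hd_neq0.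
rewrite mxE in yij_neq0.
have [W /minsetP[/= yW_neq0 W_min] W_sub] :=
  minset_exists (P := [pred V | y V != 0]) yij_neq0.
exists W; split=> // [|V ltVW].
  have card_Vd (k : 'I_#|Vset n d|) : (#|enum_val k| <= d)%N.
    by have := enum_valP k; rewrite inE.
  rewrite -addnn; apply: leq_trans (subset_leq_card W_sub) _.
  exact: leq_trans (leq_card_setU _ _) (leq_add (card_Vd i) (card_Vd j)).
apply/eqP; apply: contraTT ltVW => yV_neq0.
by apply/negP=> /[dup] /proper_sub /(W_min _ yV_neq0) ->; rewrite properxx.
Qed.

End MomentMatrix.

Theorem lemma4p3 (F : finFieldType) (n d : nat) (y : {set 'I_n} -> F) :
  (1 <= d)%N ->
  Hmx d y != 0 ->
  (rk d y <= d)%N ->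
  exists e : nat, [/\ (e < d)%N, rk e y = rk e.+1 y & (0 < rk e y)%N].
Proof.
(* 1 <= d is implied by the other two hypotheses. *)
move=> _ Hd_neq0 rk_d_le.
have [W [yW_neq0 W_le_2d y_proper]] := Hmx_neq0_minimal_support y d Hd_neq0.
pose e0 := uphalf #|W|.
have e0_W : (e0 <= #|W| <= e0.*2)%N.
  by rewrite leq_uphalf_double -addnn leq_addr uphalfK leq_addl.
have e0_le_d : (e0 <= d)%N by rewrite leq_uphalf_double.
have e0_lt_rk := rk_gt_minimal_support y W e0 yW_neq0 y_proper e0_W.
have [e /andP[e0_le_e e_lt_d] flat] :=
  nondecreasing_flat_step (rk_homo y) e0_le_d ltac:(lia).
exists e; split=> //.
exact: leq_trans (leq_ltn_trans (leq0n e0) e0_lt_rk) (rk_homo y _ _ e0_le_e).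
Qed.
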